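(* Let $f\colon M\to\mathbb H$ be a minimal conformal immersion with conjugate surface $f^*$, and let $\hat f$ be its simple factor dressing with parameters $(\mu,m,n)$, $\mu\in\mathbb C\setminus\{0,1\}$, $m,n\in\mathbb H_*$. Then $\hat f$ is a minimal surface in $\mathbb H$; $\hat f$ is unchanged if $(\mu,m,n)$ is replaced by $(\mu,mz,nw)$ for any $z,w\in\mathbb C_*$ or by $(\bar\mu^{-1},mj,nj)$; and if $\mu\in S^1\setminus\{1\}$ then $\hat f=f$.
   Context: Quaternions $\mathbb H$, $\mathbb H_*=\mathbb H\setminus\{0\}$, $\mathbb C=\operatorname{span}_{\mathbb R}\{1,i\}\subset\mathbb H$, $\mathbb C_*=\mathbb C\setminus\{0\}$. $M$ Riemann surface, $\tilde M$ universal cover, $*\omega(X)=\omega(JX)$; a conjugate surface of minimal $f$ is $f^*\colon\tilde M\to\mathbb H$ with $df^*=-*df$. Simple factor dressing: for $\mu\in\mathbb C\setminus\{0,1\}$ put $a=\frac{\mu+\mu^{-1}}2$, $b=i\frac{\mu^{-1}-\mu}2$; for $m,n\in\mathbb H_*$ the simple factor dressing of $f$ with parameters $(\mu,m,n)$ is $$\hat f=-f\frac{m(a-1)m^{-1}}2+f^*\frac{mbm^{-1}}2-n\frac{b}{a-1}n^{-1}\Big(f\frac{mbm^{-1}}2+f^*\frac{m(a-1)m^{-1}}2\Big)\colon\tilde M\to\mathbb H;$$ for $m=n=1$ it is denoted $f^\mu$ (simple factor dressing with parameter $\mu$). *)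

From Stdlib Require Import Reals.
Open Scope R_scope.

(** Quaternions H = R^4 with basis 1, i, j, k. *)
Record quat := mkQ { q0 : R; q1 : R; q2 : R; q3 : R }.

Definition qzero : quat := mkQ 0 0 0 0.
Definition qone  : quat := mkQ 1 0 0 0.
Definition qi    : quat := mkQ 0 1 0 0.
Definition qj    : quat := mkQ 0 0 1 0.

Definition qadd (p q : quat) : quat :=
  mkQ (q0 p + q0 q) (q1 p + q1 q) (q2 p + q2 q) (q3 p + q3 q).
Definition qopp (p : quat) : quat := mkQ (- q0 p) (- q1 p) (- q2 p) (- q3 p).
Definition qsub (p q : quat) : quat := qadd p (qopp q).
Definition qscale (r : R) (p : quat) : quat :=
  mkQ (r * q0 p) (r * q1 p) (r * q2 p) (r * q3 p).
Definition qmul (p q : quat) : quat :=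
  mkQ (q0 p * q0 q - q1 p * q1 q - q2 p * q2 q - q3 p * q3 q)
      (q0 p * q1 q + q1 p * q0 q + q2 p * q3 q - q3 p * q2 q)
      (q0 p * q2 q - q1 p * q3 q + q2 p * q0 q + q3 p * q1 q)
      (q0 p * q3 q + q1 p * q2 q - q2 p * q1 q + q3 p * q0 q).
Definition qconj (p : quat) : quat := mkQ (q0 p) (- q1 p) (- q2 p) (- q3 p).
Definition qdot (p q : quat) : R :=
  q0 p * q0 q + q1 p * q1 q + q2 p * q2 q + q3 p * q3 q.
Definition qnorm2 (p : quat) : R := qdot p p.
Definition qinv (p : quat) : quat := qscale (/ qnorm2 p) (qconj p).

(** C = span_R{1,i} inside H *)
Definition is_complex (z : quat) : Prop := q2 z = 0 /\ q3 z = 0.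

(** Partial derivatives of maps R^2 -> H (componentwise). Points of the
    domain are (x,y), identified with x + i y in C; J d/dx = d/dy. *)
Definition has_dx (g : R -> R -> quat) (x y : R) (d : quat) : Prop :=
  derivable_pt_lim (fun t => q0 (g t y)) x (q0 d) /\
  derivable_pt_lim (fun t => q1 (g t y)) x (q1 d) /\
  derivable_pt_lim (fun t => q2 (g t y)) x (q2 d) /\
  derivable_pt_lim (fun t => q3 (g t y)) x (q3 d).
Definition has_dy (g : R -> R -> quat) (x y : R) (d : quat) : Prop :=
  derivable_pt_lim (fun t => q0 (g x t)) y (q0 d) /\
  derivable_pt_lim (fun t => q1 (g x t)) y (q1 d) /\
  derivable_pt_lim (fun t => q2 (g x t)) y (q2 d) /\
  derivable_pt_lim (fun t => q3 (g x t)) y (q3 d).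

(** Open subsets of R^2 = C (a coordinate domain of the Riemann surface). *)
Definition open2 (U : R -> R -> Prop) : Prop :=
  forall x y, U x y -> exists eps, 0 < eps /\
    (forall x' y', (x' - x) ^ 2 + (y' - y) ^ 2 < eps ^ 2 -> U x' y').

Definition cont2 (h : R -> R -> quat) (x y : R) : Prop :=
  forall eps, 0 < eps -> exists del, 0 < del /\
    (forall x' y', (x' - x) ^ 2 + (y' - y) ^ 2 < del ^ 2 ->
      qnorm2 (qsub (h x' y') (h x y)) < eps ^ 2).

(** A minimal conformal immersion g : U -> H, U open in C with conformal
    coordinate z = x + i y: g is C^2 on U (all second partials exist and
    are continuous), conformal (|g_x| = |g_y|, <g_x, g_y> = 0), an immersion
    (g_x <> 0), and minimal, which for a conformal immersion means harmonic:
    g_xx + g_yy = 0. *)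
Definition minimal_conformal_immersion (U : R -> R -> Prop)
    (g : R -> R -> quat) : Prop :=
  exists gx gy gxx gxy gyx gyy : R -> R -> quat,
    forall x y, U x y ->
      has_dx g x y (gx x y) /\ has_dy g x y (gy x y) /\
      has_dx gx x y (gxx x y) /\ has_dy gx x y (gxy x y) /\
      has_dx gy x y (gyx x y) /\ has_dy gy x y (gyy x y) /\
      cont2 gxx x y /\ cont2 gxy x y /\ cont2 gyx x y /\ cont2 gyy x y /\
      qadd (gxx x y) (gyy x y) = qzero /\
      qnorm2 (gx x y) = qnorm2 (gy x y) /\
      qdot (gx x y) (gy x y) = 0 /\
      gx x y <> qzero.

(** gs is a conjugate surface of g on U:  d gs = - * d g, where
    *w(X) = w(JX), J d/dx = d/dy.  So gs_x = - g_y and gs_y = g_x. *)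
Definition conjugate_surface (U : R -> R -> Prop)
    (g gs : R -> R -> quat) : Prop :=
  forall x y, U x y ->
    (forall d, has_dy g x y d -> has_dx gs x y (qopp d)) /\
    (forall d, has_dx g x y d -> has_dy gs x y d).

Definition sfd_a (mu : quat) : quat := qscale (/ 2) (qadd mu (qinv mu)).
Definition sfd_b (mu : quat) : quat :=
  qmul qi (qscale (/ 2) (qsub (qinv mu) mu)).

Definition simple_factor_dressing (g gs : R -> R -> quat) (mu m n : quat)
    : R -> R -> quat :=
  fun x y =>
    let a1 := qsub (sfd_a mu) qone in
    let b := sfd_b mu in
    let mA := qmul (qmul m a1) (qinv m) in
    let mB := qmul (qmul m b) (qinv m) in
    let nC := qmul (qmul n (qmul b (qinv a1))) (qinv n) in
    qsub
      (qadd (qopp (qscale (/ 2) (qmul (g x y) mA)))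
            (qscale (/ 2) (qmul (gs x y) mB)))
      (qmul nC
        (qadd (qscale (/ 2) (qmul (g x y) mB))
              (qscale (/ 2) (qmul (gs x y) mA)))).

(** Put [A := a - 1] and [C := b A^-1], so that [b = C A]. Then
    [f^ = -1/2 (f + L f R + L f* - f* R) P] with [L = n C n^-1], [R = m C m^-1] and
    [P = m A m^-1]: a combination of [f] and [f*] with constant coefficients. As
    [df* = - *df], the derivatives [(f^_x, f^_y)] arise from [(f_x, f_y)] by the twist
    [(u, v) |-> (u + v R, v - u R)], then the twist [(u, v) |-> (u - L v, v + L u)], then right
    multiplication by [-P/2]. Each twist maps conformal pairs ([|u| = |v|], [u] orthogonal to
    [v]) to conformal pairs, and kills no nonzero pair when [1 + R^2], resp. [1 + L^2], is
    nonzero; so [f^] is a conformal immersion, and it is harmonic because [f] is and the mixed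
    second derivatives of [f] agree.
    For complex [mu] one finds [A = (mu - 1)^2 / (2 mu)], [C = -i (mu + 1) / (mu - 1)] and
    [(1 + C^2) A = -2]. Complex [z, w] commute with [A, C], so [m z, n w] give the same
    conjugates; [mu |-> conj(mu)^-1] conjugates [A] and [C], which [m j, n j] undoes since
    [j c = conj(c) j]; on the unit circle [A] and [C] are real, whence
    [f^ = -1/2 (1 + C^2) A f = f]. *)

From Stdlib Require Import Reals Lra Psatz FunctionalExtensionality.
From Coquelicot Require Import Coquelicot.
Open Scope R_scope.

(** * Quaternion algebra *)

Lemma quat_eq (p q : quat) :
  q0 p = q0 q -> q1 p = q1 q -> q2 p = q2 q -> q3 p = q3 q -> p = q.
Proof. destruct p, q; simpl; intros; subst; reflexivity. Qed.

Ltac quat_ring :=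
  repeat match goal with q : quat |- _ => destruct q end;
  apply quat_eq; simpl; ring.

Lemma qmul_assoc p q r : qmul (qmul p q) r = qmul p (qmul q r).
Proof. quat_ring. Qed.

Lemma qmul_1l p : qmul qone p = p.
Proof. quat_ring. Qed.

Lemma qmul_1r p : qmul p qone = p.
Proof. quat_ring. Qed.

Lemma qnorm2_mul p q : qnorm2 (qmul p q) = qnorm2 p * qnorm2 q.
Proof. destruct p, q; unfold qnorm2, qdot; simpl; ring. Qed.

Lemma qdot_mulr p u v : qdot (qmul u p) (qmul v p) = qnorm2 p * qdot u v.
Proof. destruct p, u, v; unfold qnorm2, qdot; simpl; ring. Qed.

Lemma qdot_scale r u v : qdot (qscale r u) (qscale r v) = r ^ 2 * qdot u v.
Proof. destruct u, v; unfold qdot; simpl; ring. Qed.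

Lemma qnorm2_ge0 p : 0 <= qnorm2 p.
Proof. destruct p; unfold qnorm2, qdot; simpl; nra. Qed.

Lemma qnorm2_eq0 p : qnorm2 p = 0 -> p = qzero.
Proof.
  destruct p as [a b c d]; unfold qnorm2, qdot; simpl; intro H.
  apply quat_eq; simpl; nra.
Qed.

Lemma qnorm2_pos p : p <> qzero -> 0 < qnorm2 p.
Proof.
  intro Hp; destruct (qnorm2_ge0 p) as [|E]; [assumption|].
  exfalso; apply Hp, qnorm2_eq0; auto.
Qed.

Lemma qmul_eq0_r p q : p <> qzero -> qmul p q = qzero -> q = qzero.
Proof.
  intros Hp E; apply qnorm2_eq0.
  assert (N : qnorm2 p * qnorm2 q = 0)
    by (rewrite <- qnorm2_mul, E; unfold qnorm2, qdot; simpl; ring).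
  pose proof (qnorm2_pos p Hp); nra.
Qed.

Lemma qmul_eq0_l p q : q <> qzero -> qmul p q = qzero -> p = qzero.
Proof.
  intros Hq E; apply qnorm2_eq0.
  assert (N : qnorm2 p * qnorm2 q = 0)
    by (rewrite <- qnorm2_mul, E; unfold qnorm2, qdot; simpl; ring).
  pose proof (qnorm2_pos q Hq); nra.
Qed.

Lemma qmul_neq0 p q : p <> qzero -> q <> qzero -> qmul p q <> qzero.
Proof. intros Hp Hq E; exact (Hq (qmul_eq0_r p q Hp E)). Qed.

Lemma qinv_r p : p <> qzero -> qmul p (qinv p) = qone.
Proof.
  intro Hp; pose proof (qnorm2_pos p Hp) as P.
  destruct p; unfold qinv, qnorm2, qdot in *; simpl in *; apply quat_eq; simpl; field; lra.
Qed.

Lemma qinv_l p : p <> qzero -> qmul (qinv p) p = qone.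
Proof.
  intro Hp; pose proof (qnorm2_pos p Hp) as P.
  destruct p; unfold qinv, qnorm2, qdot in *; simpl in *; apply quat_eq; simpl; field; lra.
Qed.

Lemma qinv_neq0 p : p <> qzero -> qinv p <> qzero.
Proof.
  intros Hp E; pose proof (qinv_r p Hp) as H; rewrite E in H.
  destruct p; injection H; simpl; lra.
Qed.

Lemma qinv_mul p q : p <> qzero -> q <> qzero -> qinv (qmul p q) = qmul (qinv q) (qinv p).
Proof.
  intros Hp Hq; pose proof (qnorm2_pos p Hp); pose proof (qnorm2_pos q Hq).
  destruct p, q; unfold qinv, qnorm2, qdot in *; simpl in *; apply quat_eq; simpl; field; nra.
Qed.

Definition qconjg (m c : quat) : quat := qmul (qmul m c) (qinv m).

Lemma qconjg_mul m a b :
  m <> qzero -> qmul (qconjg m a) (qconjg m b) = qconjg m (qmul a b).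
Proof.
  intro Hm; unfold qconjg.
  rewrite !qmul_assoc, <- (qmul_assoc (qinv m) m), qinv_l, qmul_1l by exact Hm.
  reflexivity.
Qed.

Lemma qconjg_one m : m <> qzero -> qconjg m qone = qone.
Proof. intro Hm; unfold qconjg; rewrite qmul_1r; exact (qinv_r m Hm). Qed.

Lemma qconjg_add m a b : qconjg m (qadd a b) = qadd (qconjg m a) (qconjg m b).
Proof. unfold qconjg, qinv; quat_ring. Qed.

Lemma qconjg_neq0 m c : m <> qzero -> c <> qzero -> qconjg m c <> qzero.
Proof. intros; apply qmul_neq0; [apply qmul_neq0 | apply qinv_neq0]; assumption. Qed.

Lemma qconjg_intertwine m z c c' :
  m <> qzero -> z <> qzero -> qmul z c' = qmul c z -> qconjg (qmul m z) c' = qconjg m c.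
Proof.
  intros Hm Hz Hzc; unfold qconjg.
  rewrite qinv_mul by assumption.
  rewrite !qmul_assoc, <- (qmul_assoc z c'), Hzc, !qmul_assoc.
  rewrite <- (qmul_assoc z (qinv z)), qinv_r by exact Hz.
  rewrite qmul_1l, <- qmul_assoc; reflexivity.
Qed.

(** * Normal form of the simple factor dressing *)

Definition dress_core (L R u w : quat) : quat :=
  qsub (qadd (qadd u (qmul (qmul L u) R)) (qmul L w)) (qmul w R).

Definition dress (L R P u w : quat) : quat :=
  qscale (- / 2) (qmul (dress_core L R u w) P).

Definition sfd_a1 (mu : quat) : quat := qsub (sfd_a mu) qone.
Definition sfd_c (mu : quat) : quat := qmul (sfd_b mu) (qinv (sfd_a1 mu)).

Lemma sfd_eq_dress g gs mu m n x y :
  sfd_a1 mu <> qzero -> m <> qzero ->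
  simple_factor_dressing g gs mu m n x y
  = dress (qconjg n (sfd_c mu)) (qconjg m (sfd_c mu)) (qconjg m (sfd_a1 mu)) (g x y) (gs x y).
Proof.
  intros HA Hm.
  assert (Hb : sfd_b mu = qmul (sfd_c mu) (sfd_a1 mu)).
  { unfold sfd_c; rewrite qmul_assoc, qinv_l, qmul_1r by exact HA; reflexivity. }
  unfold simple_factor_dressing; fold (sfd_a1 mu); fold (sfd_c mu); rewrite Hb.
  fold (qconjg m (sfd_a1 mu)) (qconjg m (qmul (sfd_c mu) (sfd_a1 mu))) (qconjg n (sfd_c mu)).
  rewrite <- qconjg_mul by exact Hm.
  unfold dress, dress_core.
  generalize (qconjg m (sfd_c mu)) (qconjg m (sfd_a1 mu)) (qconjg n (sfd_c mu)) (g x y) (gs x y).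
  intros; quat_ring.
Qed.

(** * Conformal pairs *)

Definition conformal_pair (u v : quat) : Prop := qnorm2 u = qnorm2 v /\ qdot u v = 0.

Lemma conformal_pair_twist_l L u v :
  conformal_pair u v -> conformal_pair (qsub u (qmul L v)) (qadd v (qmul L u)).
Proof.
  intros [Hn Hd].
  assert (En : qnorm2 (qsub u (qmul L v)) - qnorm2 (qadd v (qmul L u))
               = (1 - qnorm2 L) * (qnorm2 u - qnorm2 v) - 4 * q0 L * qdot u v)
    by (destruct L, u, v; unfold qnorm2, qdot; simpl; ring).
  assert (Ed : qdot (qsub u (qmul L v)) (qadd v (qmul L u))
               = (1 - qnorm2 L) * qdot u v + q0 L * (qnorm2 u - qnorm2 v))
    by (destruct L, u, v; unfold qnorm2, qdot; simpl; ring).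
  rewrite Hn, Hd in *; split; lra.
Qed.

Lemma conformal_pair_twist_r R u v :
  conformal_pair u v -> conformal_pair (qadd u (qmul v R)) (qsub v (qmul u R)).
Proof.
  intros [Hn Hd].
  assert (En : qnorm2 (qadd u (qmul v R)) - qnorm2 (qsub v (qmul u R))
               = (1 - qnorm2 R) * (qnorm2 u - qnorm2 v) + 4 * q0 R * qdot u v)
    by (destruct R, u, v; unfold qnorm2, qdot; simpl; ring).
  assert (Ed : qdot (qadd u (qmul v R)) (qsub v (qmul u R))
               = (1 - qnorm2 R) * qdot u v - q0 R * (qnorm2 u - qnorm2 v))
    by (destruct R, u, v; unfold qnorm2, qdot; simpl; ring).
  rewrite Hn, Hd in *; split; lra.
Qed.

Lemma twist_l_eq0 L u v : qadd qone (qmul L L) <> qzero ->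
  qsub u (qmul L v) = qzero -> qadd v (qmul L u) = qzero -> u = qzero.
Proof.
  intros HL E1 E2; apply (qmul_eq0_r _ _ HL).
  replace (qmul (qadd qone (qmul L L)) u)
    with (qadd (qsub u (qmul L v)) (qmul L (qadd v (qmul L u)))) by quat_ring.
  rewrite E1, E2; quat_ring.
Qed.

Lemma twist_r_eq0 R u v : qadd qone (qmul R R) <> qzero ->
  qadd u (qmul v R) = qzero -> qsub v (qmul u R) = qzero -> u = qzero.
Proof.
  intros HR E1 E2; apply (qmul_eq0_l _ _ HR).
  replace (qmul u (qadd qone (qmul R R)))
    with (qsub (qadd u (qmul v R)) (qmul (qsub v (qmul u R)) R)) by quat_ring.
  rewrite E1, E2; quat_ring.
Qed.

Lemma conformal_pair_mulr P u v :
  conformal_pair u v -> conformal_pair (qmul u P) (qmul v P).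
Proof.
  intros [Hn Hd]; split; unfold qnorm2 in *; rewrite !qdot_mulr; [rewrite Hn | rewrite Hd]; ring.
Qed.

Lemma conformal_pair_scale r u v :
  conformal_pair u v -> conformal_pair (qscale r u) (qscale r v).
Proof.
  intros [Hn Hd]; split; unfold qnorm2 in *; rewrite !qdot_scale; [rewrite Hn | rewrite Hd]; ring.
Qed.

Lemma dress_core_twists L R u v :
  dress_core L R u (qopp v) = qsub (qadd u (qmul v R)) (qmul L (qsub v (qmul u R))) /\
  dress_core L R v u = qadd (qsub v (qmul u R)) (qmul L (qadd u (qmul v R))).
Proof. split; unfold dress_core; quat_ring. Qed.

Lemma dress_conformal L R P u v :
  conformal_pair u v -> conformal_pair (dress L R P u (qopp v)) (dress L R P v u).
Proof.
  intro Huv; destruct (dress_core_twists L R u v) as [E1 E2].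
  unfold dress; rewrite E1, E2.
  apply conformal_pair_scale; apply conformal_pair_mulr;
    apply conformal_pair_twist_l; apply conformal_pair_twist_r; exact Huv.
Qed.

Lemma dress_neq0 L R P u v :
  qadd qone (qmul L L) <> qzero -> qadd qone (qmul R R) <> qzero -> P <> qzero ->
  conformal_pair u v -> u <> qzero -> dress L R P u (qopp v) <> qzero.
Proof.
  intros HL HR HP Huv Hu E; apply Hu.
  destruct (dress_core_twists L R u v) as [E1 E2].
  assert (Z1 : dress_core L R u (qopp v) = qzero).
  { apply (qmul_eq0_l _ P HP), (qmul_eq0_r (qscale (-/2) qone)).
    - intro H; injection H; lra.
    - rewrite <- E; unfold dress; quat_ring. }
  assert (Z2 : dress_core L R v u = qzero).
  { apply qnorm2_eq0.
    destruct (conformal_pair_twist_l L _ _ (conformal_pair_twist_r R u v Huv)) as [Hn _].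
    rewrite <- E1, Z1, <- E2 in Hn; rewrite <- Hn; unfold qnorm2, qdot; simpl; ring. }
  rewrite E1 in Z1; rewrite E2 in Z2.
  pose proof (twist_l_eq0 L _ _ HL Z1 Z2) as S1.
  rewrite S1 in Z2; apply (twist_r_eq0 R u v HR S1).
  rewrite <- Z2; quat_ring.
Qed.

(** * Calculus of quaternion-valued maps *)

Definition qderiv (F : R -> quat) (x : R) (d : quat) : Prop :=
  derivable_pt_lim (fun t => q0 (F t)) x (q0 d) /\
  derivable_pt_lim (fun t => q1 (F t)) x (q1 d) /\
  derivable_pt_lim (fun t => q2 (F t)) x (q2 d) /\
  derivable_pt_lim (fun t => q3 (F t)) x (q3 d).

Lemma derivable_pt_lim_add f g x a b :
  derivable_pt_lim f x a -> derivable_pt_lim g x b ->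
  derivable_pt_lim (fun t => f t + g t) x (a + b).
Proof. apply derivable_pt_lim_plus. Qed.

Lemma derivable_pt_lim_sub f g x a b :
  derivable_pt_lim f x a -> derivable_pt_lim g x b ->
  derivable_pt_lim (fun t => f t - g t) x (a - b).
Proof. apply derivable_pt_lim_minus. Qed.

Lemma derivable_pt_lim_neg f x a :
  derivable_pt_lim f x a -> derivable_pt_lim (fun t => - f t) x (- a).
Proof. apply derivable_pt_lim_opp. Qed.

Lemma derivable_pt_lim_scal_l c f x a :
  derivable_pt_lim f x a -> derivable_pt_lim (fun t => c * f t) x (c * a).
Proof. apply derivable_pt_lim_scal. Qed.

Lemma derivable_pt_lim_scal_r c f x a :
  derivable_pt_lim f x a -> derivable_pt_lim (fun t => f t * c) x (a * c).
Proof.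
  intro H; rewrite Rmult_comm.
  apply (derivable_pt_lim_ext (fun t => c * f t)); [intro; ring | apply derivable_pt_lim_scal, H].
Qed.

Ltac lin_deriv :=
  repeat first [ apply derivable_pt_lim_add | apply derivable_pt_lim_sub
               | apply derivable_pt_lim_neg | apply derivable_pt_lim_scal_l
               | apply derivable_pt_lim_scal_r | assumption ].

Lemma qderiv_add F G x d e :
  qderiv F x d -> qderiv G x e -> qderiv (fun t => qadd (F t) (G t)) x (qadd d e).
Proof. intros (?&?&?&?) (?&?&?&?); repeat split; simpl; lin_deriv. Qed.

Lemma qderiv_opp F x d : qderiv F x d -> qderiv (fun t => qopp (F t)) x (qopp d).
Proof. intros (?&?&?&?); repeat split; simpl; lin_deriv. Qed.

Lemma qderiv_scale r F x d : qderiv F x d -> qderiv (fun t => qscale r (F t)) x (qscale r d).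
Proof. intros (?&?&?&?); repeat split; simpl; lin_deriv. Qed.

Lemma qderiv_mull c F x d : qderiv F x d -> qderiv (fun t => qmul c (F t)) x (qmul c d).
Proof. intros (?&?&?&?); repeat split; simpl; lin_deriv. Qed.

Lemma qderiv_mulr c F x d : qderiv F x d -> qderiv (fun t => qmul (F t) c) x (qmul d c).
Proof. intros (?&?&?&?); repeat split; simpl; lin_deriv. Qed.

Lemma qnorm2_add_le p q : qnorm2 (qadd p q) <= 2 * qnorm2 p + 2 * qnorm2 q.
Proof.
  assert (E : 2 * qnorm2 p + 2 * qnorm2 q - qnorm2 (qadd p q) = qnorm2 (qsub p q))
    by (destruct p, q; unfold qnorm2, qdot; simpl; ring).
  pose proof (qnorm2_ge0 (qsub p q)); lra.
Qed.

Lemma cont2_add F G x y :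
  cont2 F x y -> cont2 G x y -> cont2 (fun a b => qadd (F a b) (G a b)) x y.
Proof.
  intros HF HG eps Heps.
  destruct (HF (eps / 2)) as (d1 & Hd1 & H1); [lra|].
  destruct (HG (eps / 2)) as (d2 & Hd2 & H2); [lra|].
  exists (Rmin d1 d2); split; [apply Rmin_pos; assumption|].
  intros a b Hab.
  assert (B1 : (a - x) ^ 2 + (b - y) ^ 2 < d1 ^ 2)
    by (pose proof (Rmin_l d1 d2); pose proof (Rmin_pos d1 d2 Hd1 Hd2); nra).
  assert (B2 : (a - x) ^ 2 + (b - y) ^ 2 < d2 ^ 2)
    by (pose proof (Rmin_r d1 d2); pose proof (Rmin_pos d1 d2 Hd1 Hd2); nra).
  specialize (H1 a b B1); specialize (H2 a b B2).
  replace (qsub (qadd (F a b) (G a b)) (qadd (F x y) (G x y)))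
    with (qadd (qsub (F a b) (F x y)) (qsub (G a b) (G x y))) by quat_ring.
  eapply Rle_lt_trans; [apply qnorm2_add_le | nra].
Qed.

Lemma cont2_lipschitz (k : quat -> quat) K F x y :
  0 <= K -> (forall p q, qnorm2 (qsub (k p) (k q)) <= K * qnorm2 (qsub p q)) ->
  cont2 F x y -> cont2 (fun a b => k (F a b)) x y.
Proof.
  intros HK Hk HF eps Heps.
  set (e := eps / (K + 1)).
  assert (He : 0 < e) by (apply Rdiv_lt_0_compat; lra).
  assert (Eeps : eps = e * (K + 1)) by (unfold e; field; lra).
  destruct (HF e He) as (d & Hd & H); exists d; split; [exact Hd|].
  intros a b Hab; specialize (H a b Hab).
  eapply Rle_lt_trans; [apply Hk|].
  pose proof (qnorm2_ge0 (qsub (F a b) (F x y))); rewrite Eeps; nra.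
Qed.

Lemma cont2_opp F x y : cont2 F x y -> cont2 (fun a b => qopp (F a b)) x y.
Proof.
  apply (cont2_lipschitz qopp 1); [lra|].
  intros p q; destruct p, q; unfold qnorm2, qdot; simpl; lra.
Qed.

Lemma cont2_scale r F x y : cont2 F x y -> cont2 (fun a b => qscale r (F a b)) x y.
Proof.
  apply (cont2_lipschitz (qscale r) (r ^ 2)); [nra|].
  intros p q; destruct p, q; unfold qnorm2, qdot; simpl; lra.
Qed.

Lemma cont2_mull c F x y : cont2 F x y -> cont2 (fun a b => qmul c (F a b)) x y.
Proof.
  apply (cont2_lipschitz (qmul c) (qnorm2 c)); [apply qnorm2_ge0|].
  intros p q; replace (qsub (qmul c p) (qmul c q)) with (qmul c (qsub p q)) by quat_ring.
  rewrite qnorm2_mul; lra.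
Qed.

Lemma cont2_mulr c F x y : cont2 F x y -> cont2 (fun a b => qmul (F a b) c) x y.
Proof.
  apply (cont2_lipschitz (fun p => qmul p c) (qnorm2 c)); [apply qnorm2_ge0|].
  intros p q; replace (qsub (qmul p c) (qmul q c)) with (qmul (qsub p q) c) by quat_ring.
  rewrite qnorm2_mul; lra.
Qed.

Lemma dress_qderiv L R P F G x d e :
  qderiv F x d -> qderiv G x e ->
  qderiv (fun t => dress L R P (F t) (G t)) x (dress L R P d e).
Proof.
  intros HF HG; unfold dress, dress_core, qsub.
  repeat first [ apply qderiv_scale | apply qderiv_add | apply qderiv_opp
               | apply qderiv_mulr | apply qderiv_mull | assumption ].
Qed.

Lemma dress_cont2 L R P F G x y :
  cont2 F x y -> cont2 G x y -> cont2 (fun a b => dress L R P (F a b) (G a b)) x y.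
Proof.
  intros HF HG; unfold dress, dress_core, qsub.
  repeat first [ apply cont2_scale | apply cont2_add | apply cont2_opp
               | apply cont2_mulr | apply cont2_mull | assumption ].
Qed.

Lemma dress_add L R P u w u' w' :
  qadd (dress L R P u w) (dress L R P u' w') = dress L R P (qadd u u') (qadd w w').
Proof. unfold dress, dress_core; quat_ring. Qed.

Lemma dress_zero L R P : dress L R P qzero qzero = qzero.
Proof. unfold dress, dress_core; quat_ring. Qed.

Lemma open2_locally_2d U x y : open2 U -> U x y -> locally_2d U x y.
Proof.
  intros HU Hxy; destruct (HU x y Hxy) as (r & Hr & Hball).
  exists (mkposreal (r / 2) ltac:(lra)); simpl; intros u v Hu Hv.
  apply Hball; apply Rabs_def2 in Hu; apply Rabs_def2 in Hv; nra.
Qed.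

Section MixedPartials.

Variables (U : R -> R -> Prop) (F Fx Fy Fxy Fyx : R -> R -> R).
Hypothesis HU : open2 U.
Hypothesis HF : forall u v, U u v ->
  derivable_pt_lim (fun t => F t v) u (Fx u v) /\
  derivable_pt_lim (fun t => F u t) v (Fy u v) /\
  derivable_pt_lim (fun t => Fx u t) v (Fxy u v) /\
  derivable_pt_lim (fun t => Fy t v) u (Fyx u v).

Lemma Derive_y_near u v : U u v -> locally u (fun z => Fy z v = Derive (fun t => F z t) v).
Proof.
  intro Huv; apply (filter_imp (fun z => U z v));
    [| exact (locally_2d_1d_const_y _ _ _ (open2_locally_2d U u v HU Huv))].
  intros z Hz; symmetry; apply is_derive_unique, is_derive_Reals, (HF z v Hz).
Qed.

Lemma Derive_x_near u v : U u v -> locally v (fun z => Fx u z = Derive (fun t => F t z) u).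
Proof.
  intro Huv; apply (filter_imp (fun z => U u z));
    [| exact (locally_2d_1d_const_x _ _ _ (open2_locally_2d U u v HU Huv))].
  intros z Hz; symmetry; apply is_derive_unique, is_derive_Reals, (HF u z Hz).
Qed.

Lemma Derive_yx u v : U u v -> Derive (fun z => Derive (fun t => F z t) v) u = Fyx u v.
Proof.
  intro Huv; transitivity (Derive (fun z => Fy z v) u).
  { symmetry; exact (Derive_ext_loc _ _ _ (Derive_y_near u v Huv)). }
  apply is_derive_unique, is_derive_Reals, (HF u v Huv).
Qed.

Lemma Derive_xy u v : U u v -> Derive (fun z => Derive (fun t => F t z) u) v = Fxy u v.
Proof.
  intro Huv; transitivity (Derive (fun z => Fx u z) v).
  { symmetry; exact (Derive_ext_loc _ _ _ (Derive_x_near u v Huv)). }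
  apply is_derive_unique, is_derive_Reals, (HF u v Huv).
Qed.

Lemma mixed_partials_eq x y : U x y ->
  continuity_2d_pt Fxy x y -> continuity_2d_pt Fyx x y -> Fxy x y = Fyx x y.
Proof.
  intros Hxy Cxy Cyx.
  pose proof (open2_locally_2d U x y HU Hxy) as HUxy.
  rewrite <- (Derive_xy x y Hxy), <- (Derive_yx x y Hxy); symmetry.
  apply Schwarz.
  - apply (locally_2d_impl U); [apply locally_2d_forall | exact HUxy].
    intros u v Huv; destruct (HF u v Huv) as (D1 & D2 & D3 & D4).
    repeat split.
    + exists (Fx u v); apply is_derive_Reals, D1.
    + exists (Fy u v); apply is_derive_Reals, D2.
    + apply (ex_derive_ext_loc _ _ _ (Derive_y_near u v Huv)).
      exists (Fyx u v); apply is_derive_Reals, D4.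
    + apply (ex_derive_ext_loc _ _ _ (Derive_x_near u v Huv)).
      exists (Fxy u v); apply is_derive_Reals, D3.
  - apply (continuity_2d_pt_ext_loc Fyx); [| exact Cyx].
    apply (locally_2d_impl U); [apply locally_2d_forall | exact HUxy].
    intros u v Huv; symmetry; apply Derive_yx, Huv.
  - apply (continuity_2d_pt_ext_loc Fxy); [| exact Cxy].
    apply (locally_2d_impl U); [apply locally_2d_forall | exact HUxy].
    intros u v Huv; symmetry; apply Derive_xy, Huv.
Qed.

End MixedPartials.

Lemma cont2_coord (k : quat -> R) h x y :
  (forall p q, (k p - k q) ^ 2 <= qnorm2 (qsub p q)) ->
  cont2 h x y -> continuity_2d_pt (fun u v => k (h u v)) x y.
Proof.
  intros Hk Hh eps; destruct (Hh eps (cond_pos eps)) as (d & Hd & H).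
  exists (mkposreal (d / 2) ltac:(lra)); simpl; intros u v Hu Hv.
  apply Rabs_def2 in Hu; apply Rabs_def2 in Hv.
  assert (B : (u - x) ^ 2 + (v - y) ^ 2 < d ^ 2) by nra.
  specialize (H u v B); specialize (Hk (h u v) (h x y)).
  pose proof (cond_pos eps); apply Rabs_def1; nra.
Qed.

Lemma qmixed_partials_eq U g gx gy gxy gyx : open2 U ->
  (forall u v, U u v ->
     has_dx g u v (gx u v) /\ has_dy g u v (gy u v) /\
     has_dy gx u v (gxy u v) /\ has_dx gy u v (gyx u v)) ->
  forall x y, U x y -> cont2 gxy x y -> cont2 gyx x y -> gxy x y = gyx x y.
Proof.
  intros HU Hg x y Hxy Cxy Cyx.
  apply quat_eq;
  match goal with |- ?k (gxy x y) = ?k (gyx x y) =>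
    apply (mixed_partials_eq U (fun u v => k (g u v)) (fun u v => k (gx u v))
             (fun u v => k (gy u v)) (fun u v => k (gxy u v)) (fun u v => k (gyx u v)) HU);
    [ intros u v Huv; destruct (Hg u v Huv) as ((?&?&?&?) & (?&?&?&?) & (?&?&?&?) & (?&?&?&?));
      repeat split; assumption
    | exact Hxy
    | apply cont2_coord; [ intros [a0 a1 a2 a3] [b0 b1 b2 b3]; unfold qnorm2, qdot; simpl;
        pose proof (Rle_0_sqr (a0 + - b0)); pose proof (Rle_0_sqr (a1 + - b1));
        pose proof (Rle_0_sqr (a2 + - b2)); pose proof (Rle_0_sqr (a3 + - b3));
        unfold Rsqr in *; nra
      | assumption ] .. ]
  end.
Qed.

Lemma dress_minimal U f fs L R P :
  open2 U -> minimal_conformal_immersion U f -> conjugate_surface U f fs ->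
  qadd qone (qmul L L) <> qzero -> qadd qone (qmul R R) <> qzero -> P <> qzero ->
  minimal_conformal_immersion U (fun x y => dress L R P (f x y) (fs x y)).
Proof.
  intros HU (gx & gy & gxx & gxy & gyx & gyy & Hf) Hconj HL HR HP.
  set (D := dress L R P).
  assert (Hsym : forall x y, U x y -> gxy x y = gyx x y).
  { intros x y Hxy; destruct (Hf x y Hxy) as (_ & _ & _ & _ & _ & _ & _ & Cxy & Cyx & _).
    apply (qmixed_partials_eq U f gx gy gxy gyx HU); try assumption.
    intros u v Huv; destruct (Hf u v Huv) as (Dx & Dy & _ & Dxy & Dyx & _); auto. }
  exists (fun x y => D (gx x y) (qopp (gy x y))), (fun x y => D (gy x y) (gx x y)),
         (fun x y => D (gxx x y) (qopp (gyx x y))), (fun x y => D (gxy x y) (qopp (gyy x y))),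
         (fun x y => D (gyx x y) (gxx x y)), (fun x y => D (gyy x y) (gxy x y)).
  intros x y Hxy.
  destruct (Hf x y Hxy) as (Dx & Dy & Dxx & Dxy & Dyx & Dyy & Cxx & Cxy & Cyx & Cyy & Lap & Hn & Hd & Hnz).
  destruct (Hconj x y Hxy) as [Cj1 Cj2].
  assert (Hconf : conformal_pair (gx x y) (gy x y)) by (split; assumption).
  refine (conj _ (conj _ (conj _ (conj _ (conj _ (conj _ (conj _ (conj _ (conj _ (conj _
          (conj _ (conj _ (conj _ _))))))))))))).
  - exact (dress_qderiv L R P _ _ x _ _ Dx (Cj1 _ Dy)).
  - exact (dress_qderiv L R P _ _ y _ _ Dy (Cj2 _ Dx)).
  - exact (dress_qderiv L R P _ _ x _ _ Dxx (qderiv_opp _ _ _ Dyx)).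
  - exact (dress_qderiv L R P _ _ y _ _ Dxy (qderiv_opp _ _ _ Dyy)).
  - exact (dress_qderiv L R P _ _ x _ _ Dyx Dxx).
  - exact (dress_qderiv L R P _ _ y _ _ Dyy Dxy).
  - exact (dress_cont2 L R P _ _ x y Cxx (cont2_opp _ _ _ Cyx)).
  - exact (dress_cont2 L R P _ _ x y Cxy (cont2_opp _ _ _ Cyy)).
  - exact (dress_cont2 L R P _ _ x y Cyx Cxx).
  - exact (dress_cont2 L R P _ _ x y Cyy Cxy).
  - unfold D; rewrite dress_add, Lap, (Hsym x y Hxy).
    replace (qadd (qopp (gyx x y)) (gyx x y)) with qzero by quat_ring.
    apply dress_zero.
  - exact (proj1 (dress_conformal L R P _ _ Hconf)).
  - exact (proj2 (dress_conformal L R P _ _ Hconf)).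
  - exact (dress_neq0 L R P _ _ HL HR HP Hconf Hnz).
Qed.

(** * Complex spectral parameter *)

Definition cq (z : C) : quat := mkQ (Re z) (Im z) 0 0.

Lemma is_complex_cq (z : C) : is_complex (cq z).
Proof. split; reflexivity. Qed.

Lemma is_complexP p : is_complex p -> exists z, p = cq z.
Proof. destruct p as [a b c d]; intros [H2 H3]; simpl in *; subst; exists (a, b); reflexivity. Qed.

Lemma cq_add (a b : C) : qadd (cq a) (cq b) = cq (a + b).
Proof. destruct a, b; apply quat_eq; simpl; ring. Qed.

Lemma cq_sub (a b : C) : qsub (cq a) (cq b) = cq (a - b).
Proof. destruct a, b; apply quat_eq; simpl; ring. Qed.

Lemma cq_mul (a b : C) : qmul (cq a) (cq b) = cq (a * b).
Proof. destruct a, b; apply quat_eq; simpl; ring. Qed.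

Lemma cq_scale (r : R) (a : C) : qscale r (cq a) = cq (r * a).
Proof. destruct a; apply quat_eq; simpl; ring. Qed.

Lemma cq_conj (a : C) : qconj (cq a) = cq (Cconj a).
Proof. destruct a; apply quat_eq; simpl; ring. Qed.

Lemma cq_one : qone = cq 1.
Proof. apply quat_eq; reflexivity. Qed.

Lemma cq_i : qi = cq Ci.
Proof. apply quat_eq; reflexivity. Qed.

Lemma cq_inj (a b : C) : cq a = cq b -> a = b.
Proof. destruct a, b; intro H; injection H; intros; subst; reflexivity. Qed.

Lemma cq_neq0 (a : C) : a <> 0%C -> cq a <> qzero.
Proof. intros Ha E; apply Ha, cq_inj; rewrite E; apply quat_eq; reflexivity. Qed.

Lemma cq_inv (a : C) : a <> 0%C -> qinv (cq a) = cq (/ a).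
Proof.
  destruct a as [x y]; intro Ha.
  assert (N : x * x + y * y <> 0).
  { intro E; apply Ha; apply injective_projections; simpl; nra. }
  unfold qinv, qnorm2, qdot; apply quat_eq; simpl; field; exact N.
Qed.

Lemma Cinv_conj_unit (z : C) : Re z * Re z + Im z * Im z = 1 -> (/ Cconj z = z)%C.
Proof.
  destruct z as [x y]; simpl; intro N.
  apply injective_projections; simpl;
    replace (x * (x * 1) + - y * (- y * 1)) with 1 by nra; field.
Qed.

Lemma cq_real (w : C) : Cconj w = w -> cq w = mkQ (Re w) 0 0 0.
Proof.
  destruct w as [a b]; intro H; injection H; intro Hb.
  apply quat_eq; simpl; lra.
Qed.

Section ComplexCoefficients.

Local Open Scope C_scope.

Definition sfd_a1_C (z : C) : C := (z - 1) * (z - 1) / (2 * z).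
Definition sfd_c_C (z : C) : C := - Ci * (z + 1) / (z - 1).

Lemma sfd_a1_cq (z : C) : z <> 0 -> sfd_a1 (cq z) = cq (sfd_a1_C z).
Proof.
  intro Hz; unfold sfd_a1, sfd_a, sfd_a1_C.
  rewrite cq_inv, cq_add, cq_scale, cq_one, cq_sub by exact Hz.
  f_equal; rewrite RtoC_inv by discrR; field; exact Hz.
Qed.

Lemma sfd_b_cq (z : C) : z <> 0 -> sfd_b (cq z) = cq (Ci * ((/ z - z) / 2)).
Proof.
  intro Hz; unfold sfd_b.
  rewrite cq_inv, cq_sub, cq_scale, cq_i, cq_mul by exact Hz.
  f_equal; rewrite RtoC_inv by discrR; field; exact Hz.
Qed.

Lemma sub1_neq0 (z : C) : z <> 1 -> z - 1 <> 0.
Proof. intros H E; apply H; rewrite <- (Cplus_0_l 1), <- E; ring. Qed.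

Lemma sfd_a1_C_neq0 (z : C) : z <> 0 -> z <> 1 -> sfd_a1_C z <> 0.
Proof.
  intros Hz H1 E; apply (Cmult_neq_0 (z - 1) (z - 1)); try apply sub1_neq0, H1.
  replace ((z - 1) * (z - 1)) with (sfd_a1_C z * (2 * z)) by (unfold sfd_a1_C; field; exact Hz).
  rewrite E; ring.
Qed.

Lemma sfd_c_C_sq (z : C) : z <> 0 -> z <> 1 -> (1 + sfd_c_C z * sfd_c_C z) * sfd_a1_C z = - (2).
Proof.
  intros Hz H1; pose proof (sub1_neq0 z H1) as Hz1.
  (* [field] treats [Ci] as an indeterminate, so [Ci * Ci = -1] is used by hand. *)
  assert (Ci2 : Ci * Ci = - 1) by (apply injective_projections; simpl; ring).
  assert (E : sfd_c_C z * sfd_c_C z = - ((z + 1) * (z + 1)) / ((z - 1) * (z - 1))).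
  { unfold sfd_c_C; transitivity (Ci * Ci * ((z + 1) * (z + 1)) / ((z - 1) * (z - 1)));
      [field; exact Hz1 | rewrite Ci2; field; exact Hz1]. }
  rewrite E; unfold sfd_a1_C; field; split; assumption.
Qed.

Lemma sfd_c_cq (z : C) : z <> 0 -> z <> 1 -> sfd_c (cq z) = cq (sfd_c_C z).
Proof.
  intros Hz H1; unfold sfd_c.
  rewrite sfd_a1_cq, sfd_b_cq, cq_inv, cq_mul by auto using sfd_a1_C_neq0.
  f_equal; unfold sfd_c_C, sfd_a1_C; field; split; [apply sub1_neq0, H1 | exact Hz].
Qed.

Lemma Cconj_R (r : R) : Cconj r = r.
Proof. apply injective_projections; simpl; ring. Qed.

Lemma Cconj_neq0 (z : C) : z <> 0 -> Cconj z <> 0.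
Proof. intros Hz E; apply Hz; rewrite <- (Cconj_conj z), E; apply Cconj_R. Qed.

Lemma sfd_a1_C_reflect (z : C) : z <> 0 -> sfd_a1_C (/ Cconj z) = Cconj (sfd_a1_C z).
Proof.
  intro Hz; pose proof (Cconj_neq0 z Hz) as Hz'.
  unfold sfd_a1_C.
  rewrite Cdiv_conj, !Cmult_conj, !Cminus_conj, !Cconj_R.
  - field; exact Hz'.
  - apply Cmult_neq_0; [intro E; injection E; lra | exact Hz].
Qed.

Lemma Cconj_neq1 (z : C) : z <> 1 -> Cconj z <> 1.
Proof. intros H1 E; apply H1; rewrite <- (Cconj_conj z), E; apply Cconj_R. Qed.

Lemma sfd_c_C_reflect (z : C) : z <> 0 -> z <> 1 -> sfd_c_C (/ Cconj z) = Cconj (sfd_c_C z).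
Proof.
  intros Hz H1; pose proof (Cconj_neq0 z Hz) as Hz'.
  pose proof (sub1_neq0 _ (Cconj_neq1 z H1)) as Hz1'.
  assert (Ci' : Cconj Ci = - Ci) by (apply injective_projections; simpl; ring).
  unfold sfd_c_C.
  rewrite Cdiv_conj, !Cmult_conj, Copp_conj, Cplus_conj, Cminus_conj, Cconj_R, Ci'
    by exact (sub1_neq0 z H1).
  assert (Hz1'' : 1 - Cconj z <> 0) by (intro E; apply Hz1'; rewrite <- Copp_minus_distr, E; ring).
  field; repeat split; assumption.
Qed.

Lemma reflect_neq0 (z : C) : z <> 0 -> / Cconj z <> 0.
Proof.
  intros Hz E; pose proof (Cinv_r _ (Cconj_neq0 z Hz)) as H.
  rewrite E, Cmult_0_r in H; injection H; lra.
Qed.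

Lemma reflect_neq1 (z : C) : z <> 0 -> z <> 1 -> / Cconj z <> 1.
Proof.
  intros Hz H1 E; apply (Cconj_neq1 z H1).
  pose proof (Cinv_r _ (Cconj_neq0 z Hz)) as H; rewrite E, Cmult_1_r in H; exact H.
Qed.

Lemma C_real (w : C) : Cconj w = w -> w = RtoC (Re w).
Proof. destruct w as [a b]; intro H; injection H; intro Hb; apply injective_projections; simpl; lra. Qed.

End ComplexCoefficients.

Lemma complex_comm p q : is_complex p -> is_complex q -> qmul p q = qmul q p.
Proof. destruct p, q; intros [] []; simpl in *; subst; apply quat_eq; simpl; ring. Qed.

Lemma qj_conj p : is_complex p -> qmul qj (qconj p) = qmul p qj.
Proof. destruct p; intros []; simpl in *; subst; apply quat_eq; simpl; ring. Qed.

Lemma qconjg_mul_complex m w c : m <> qzero -> w <> qzero ->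
  is_complex w -> is_complex c -> qconjg (qmul m w) c = qconjg m c.
Proof. intros; apply qconjg_intertwine, complex_comm; assumption. Qed.

Lemma qconjg_mul_j m c : m <> qzero -> is_complex c -> qconjg (qmul m qj) (qconj c) = qconjg m c.
Proof.
  intros Hm Hc; apply qconjg_intertwine, qj_conj; try assumption.
  intro E; injection E; lra.
Qed.

Lemma qconjg_real m r : m <> qzero -> qconjg m (mkQ r 0 0 0) = mkQ r 0 0 0.
Proof.
  intro Hm; unfold qconjg.
  replace (qmul m (mkQ r 0 0 0)) with (qmul (mkQ r 0 0 0) m) by quat_ring.
  rewrite qmul_assoc, qinv_r, qmul_1r by exact Hm; reflexivity.
Qed.

Lemma one_add_sq_qconjg m c : m <> qzero ->
  qadd qone (qmul (qconjg m c) (qconjg m c)) = qconjg m (qadd qone (qmul c c)).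
Proof. intro Hm; rewrite qconjg_add, qconjg_mul, qconjg_one by exact Hm; reflexivity. Qed.

Lemma dress_real r s u w : (1 + r * r) * s = -2 ->
  dress (mkQ r 0 0 0) (mkQ r 0 0 0) (mkQ s 0 0 0) u w = u.
Proof.
  intro H; unfold dress, dress_core; destruct u, w; apply quat_eq; simpl.
  all: match goal with |- ?L = ?a => transitivity (- / 2 * ((1 + r * r) * s) * a);
         [ring | rewrite H; field] end.
Qed.

Lemma sfd_cq_dress g gs (z : C) m n x y : z <> 0%C -> z <> 1%C -> m <> qzero ->
  simple_factor_dressing g gs (cq z) m n x y
  = dress (qconjg n (cq (sfd_c_C z))) (qconjg m (cq (sfd_c_C z)))
          (qconjg m (cq (sfd_a1_C z))) (g x y) (gs x y).
Proof.
  intros Hz0 Hz1 Hm.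
  assert (HA : sfd_a1 (cq z) <> qzero)
    by (rewrite sfd_a1_cq by exact Hz0; apply cq_neq0, sfd_a1_C_neq0; assumption).
  rewrite (sfd_eq_dress _ _ _ _ _ _ _ HA Hm), sfd_c_cq, sfd_a1_cq by assumption.
  reflexivity.
Qed.

Lemma sfd_minimal U f fs (z : C) m n : z <> 0%C -> z <> 1%C -> m <> qzero -> n <> qzero ->
  open2 U -> minimal_conformal_immersion U f -> conjugate_surface U f fs ->
  minimal_conformal_immersion U (simple_factor_dressing f fs (cq z) m n).
Proof.
  intros Hz0 Hz1 Hm Hn HU Hf Hfs.
  assert (Hsq : forall k, k <> qzero ->
            qadd qone (qmul (qconjg k (cq (sfd_c_C z))) (qconjg k (cq (sfd_c_C z)))) <> qzero).
  { intros k Hk; rewrite one_add_sq_qconjg, cq_one, cq_mul, cq_add by exact Hk.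
    apply qconjg_neq0, cq_neq0; [exact Hk|].
    intro E; pose proof (sfd_c_C_sq z Hz0 Hz1) as S; rewrite E, Cmult_0_l in S.
    injection S; lra. }
  replace (simple_factor_dressing f fs (cq z) m n)
    with (fun x y => dress (qconjg n (cq (sfd_c_C z))) (qconjg m (cq (sfd_c_C z)))
                       (qconjg m (cq (sfd_a1_C z))) (f x y) (fs x y))
    by (do 2 (apply functional_extensionality; intro); symmetry; apply sfd_cq_dress; assumption).
  apply dress_minimal; auto.
  apply qconjg_neq0, cq_neq0, sfd_a1_C_neq0; assumption.
Qed.

Lemma sfd_rescale g gs (z : C) m n w1 w2 x y : z <> 0%C -> z <> 1%C -> m <> qzero -> n <> qzero ->
  is_complex w1 -> w1 <> qzero -> is_complex w2 -> w2 <> qzero ->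
  simple_factor_dressing g gs (cq z) (qmul m w1) (qmul n w2) x y
  = simple_factor_dressing g gs (cq z) m n x y.
Proof.
  intros Hz0 Hz1 Hm Hn Cw1 Hw1 Cw2 Hw2.
  rewrite !sfd_cq_dress by (try apply qmul_neq0; assumption).
  rewrite !qconjg_mul_complex by (assumption || apply is_complex_cq).
  reflexivity.
Qed.

Lemma sfd_reflect g gs (z : C) m n x y : z <> 0%C -> z <> 1%C -> m <> qzero -> n <> qzero ->
  simple_factor_dressing g gs (qinv (qconj (cq z))) (qmul m qj) (qmul n qj) x y
  = simple_factor_dressing g gs (cq z) m n x y.
Proof.
  intros Hz0 Hz1 Hm Hn.
  rewrite cq_conj, cq_inv by exact (Cconj_neq0 z Hz0).
  rewrite !sfd_cq_dress by (try apply qmul_neq0; try apply reflect_neq0; try apply reflect_neq1;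
                            assumption || (intro E; injection E; lra)).
  rewrite sfd_c_C_reflect, sfd_a1_C_reflect, <- !cq_conj by assumption.
  rewrite !qconjg_mul_j by (assumption || apply is_complex_cq).
  reflexivity.
Qed.

Lemma sfd_unit_circle g gs (z : C) m n x y : z <> 1%C -> m <> qzero -> n <> qzero ->
  Re z * Re z + Im z * Im z = 1 ->
  simple_factor_dressing g gs (cq z) m n x y = g x y.
Proof.
  intros Hz1 Hm Hn Hunit.
  assert (Hz0 : z <> 0%C) by (intros ->; simpl in Hunit; lra).
  assert (Hrefl : (/ Cconj z)%C = z) by (apply Cinv_conj_unit, Hunit).
  assert (Ra : Cconj (sfd_a1_C z) = sfd_a1_C z)
    by (rewrite <- sfd_a1_C_reflect, Hrefl by exact Hz0; reflexivity).
  assert (Rc : Cconj (sfd_c_C z) = sfd_c_C z)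
    by (rewrite <- sfd_c_C_reflect, Hrefl by assumption; reflexivity).
  rewrite sfd_cq_dress, (cq_real _ Ra), (cq_real _ Rc), !qconjg_real by assumption.
  apply dress_real.
  pose proof (sfd_c_C_sq z Hz0 Hz1) as S.
  rewrite (C_real _ Ra), (C_real _ Rc) in S.
  revert S; generalize (Re (sfd_c_C z)) (Re (sfd_a1_C z)); intros r s S.
  apply (f_equal Re) in S; simpl in S; lra.
Qed.

Theorem mainTheorem9
  (U : R -> R -> Prop) (f fs : R -> R -> quat) (mu m n : quat) :
  open2 U ->
  minimal_conformal_immersion U f ->
  conjugate_surface U f fs ->
  is_complex mu -> mu <> qzero -> mu <> qone ->
  m <> qzero -> n <> qzero ->
  (* the dressed surface is minimal *)
  minimal_conformal_immersion U (simple_factor_dressing f fs mu m n) /\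
  (* invariance under (mu,m,n) -> (mu, m z, n w), z, w in C_* *)
  (forall z w : quat, is_complex z -> z <> qzero ->
                      is_complex w -> w <> qzero ->
     forall x y, U x y ->
       simple_factor_dressing f fs mu (qmul m z) (qmul n w) x y
       = simple_factor_dressing f fs mu m n x y) /\
  (* invariance under (mu,m,n) -> (conj(mu)^-1, m j, n j) *)
  (forall x y, U x y ->
     simple_factor_dressing f fs (qinv (qconj mu)) (qmul m qj) (qmul n qj) x y
     = simple_factor_dressing f fs mu m n x y) /\
  (* mu in S^1 \ {1}  ==>  f-hat = f *)
  (qnorm2 mu = 1 ->
     forall x y, U x y -> simple_factor_dressing f fs mu m n x y = f x y).
Proof.
  intros HU Hf Hfs Hc Hmu0 Hmu1 Hm Hn.
  destruct (is_complexP mu Hc) as [z ->].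
  assert (Hz0 : z <> 0%C) by (intros ->; apply Hmu0, quat_eq; reflexivity).
  assert (Hz1 : z <> 1%C) by (intros ->; apply Hmu1, quat_eq; reflexivity).
  split; [| split; [| split]].
  - apply sfd_minimal; assumption.
  - intros w1 w2 Cw1 Hw1 Cw2 Hw2 x y _; apply sfd_rescale; assumption.
  - intros x y _; apply sfd_reflect; assumption.
  - intros Hunit x y _; apply sfd_unit_circle; try assumption.
    unfold qnorm2, qdot in Hunit; simpl in Hunit; lra.
Qed.
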